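(* For every real $\eta > -1$, $$ \frac{15\pi}{32} = \frac{ {}_{3}F_{2}\!\!\left[ \begin{matrix} -\tfrac{3}{2},1,-\eta \\ \tfrac{7}{2},2+\eta \end{matrix} \ \Bigg| \ -1 \right] }{ {}_{3}F_{2}\!\!\left[ \begin{matrix} -\tfrac{3}{2},\tfrac{1}{2},1+\eta \\ 1,2+\eta \end{matrix} \ \Bigg| \ 1 \right]}.$$
   Context: ${}_pF_q\left[\begin{matrix} a_1,\dots,a_p\\ b_1,\dots,b_q\end{matrix}\,\Big|\, z\right] = \sum_{n\ge 0} \frac{(a_1)_n\cdots(a_p)_n}{(b_1)_n\cdots(b_q)_n}\frac{z^n}{n!}$ with $(x)_n = \Gamma(x+n)/\Gamma(x)$. *)

From Stdlib Require Import Reals List.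
From Coquelicot Require Import Coquelicot.
Open Scope R_scope.

Fixpoint poch (x : R) (n : nat) : R :=
  match n with
  | O => 1
  | S m => poch x m * (x + INR m)
  end.

Definition poch_prod (l : list R) (n : nat) : R :=
  fold_right (fun x acc => poch x n * acc) 1 l.

Definition hyp_term (a b : list R) (z : R) (n : nat) : R :=
  poch_prod a n / poch_prod b n * z ^ n / INR (Factorial.fact n).

Definition pFq (a b : list R) (z : R) : R := Series (hyp_term a b z).

(* Write u = eta + 1.  Termwise, the numerator series is sum_n d_n P_n(u) and the
   denominator series is sum_m c_m u/(u+m), where d_n = (-3/2)_n/(7/2)_n,
   c_m = (-3/2)_m (1/2)_m / m!^2 and P_n(u) = prod_(k<n) (u-1-k)/(u+1+k), so |P_n(u)| <= 1.
   The rational function u/(u+m) expands in the basis P_n(u) with nonnegative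
   coefficients beta(m,n), supported on n <= m and summing to 1, and Gosper's
   algorithm evaluates the column sums sum_m c_m beta(m,n) = 32/(15 pi) d_n; pi enters
   through Wallis' product, since c_m ~ 3/(4 pi m^3).  Exchanging the summations gives
   denominator = 32/(15 pi) * numerator.  The exchange is legitimate because c_m >= 0
   for m >= 2: the truncation error at N is then dominated by its value for P = 1,
   namely 32/(15 pi) sum_(n<=N) d_n - sum_(m<=N) c_m, which tends to 0.  Finally the
   denominator is at least c_0 + c_1 u/(u+1) >= 1/4, so the quotient is well defined. *)

From Stdlib Require Import Reals List Lra Lia Factorial.
From Coquelicot Require Import Coquelicot.
Import ListNotations.
Open Scope R_scope.

Lemma poch_pos (x : R) (n : nat) : 0 < x -> 0 < poch x n.
Proof.
  intros Hx; induction n as [|n IH]; simpl; [lra|].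
  pose proof (pos_INR n); apply Rmult_lt_0_compat; lra.
Qed.

Lemma poch_1 (n : nat) : poch 1 n = INR (fact n).
Proof.
  induction n as [|n IH]; [reflexivity|].
  simpl poch; rewrite IH, fact_simpl, mult_INR, S_INR; ring.
Qed.

Lemma poch_shift (x : R) (n : nat) : poch x n * (x + INR n) = x * poch (x + 1) n.
Proof.
  induction n as [|n IH]; simpl poch; [simpl; ring|].
  rewrite S_INR.
  replace (poch x n * (x + INR n) * (x + (INR n + 1)))
    with (poch x n * (x + INR n) * (x + 1 + INR n)) by ring.
  rewrite IH; ring.
Qed.

Lemma is_series_sum_f_R0 (a : nat -> R) (l : R) :
  is_series a l <-> is_lim_seq (sum_f_R0 a) l.
Proof.
  split; intros H.
  - exact (is_lim_seq_ext _ _ l (sum_n_Reals a) H).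
  - exact (is_lim_seq_ext _ (sum_n a) l (fun N => eq_sym (sum_n_Reals a N)) H).
Qed.

Lemma sum_f_R0_switch (u : nat -> nat -> R) (m n : nat) :
  sum_f_R0 (fun i => sum_f_R0 (u i) n) m = sum_f_R0 (fun j => sum_f_R0 (fun i => u i j) m) n.
Proof.
  rewrite <- !sum_n_Reals.
  rewrite (sum_n_ext _ (fun i => sum_n (u i) n)) by (intros; symmetry; apply sum_n_Reals).
  rewrite sum_n_switch; apply sum_n_ext; intros j; apply sum_n_Reals.
Qed.

Lemma sum_f_R0_telescope (a F : nat -> R) (N : nat) :
  (forall k, a k = F (S k) - F k) -> sum_f_R0 a N = F (S N) - F O.
Proof.
  intros Ha; induction N as [|N IH]; simpl; [apply Ha|].
  rewrite IH, Ha; ring.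
Qed.

Lemma is_series_telescope (a F : nat -> R) (l : R) :
  (forall k, a k = F (S k) - F k) -> is_lim_seq F l -> is_series a (l - F O).
Proof.
  intros Ha HF; apply is_series_sum_f_R0.
  apply (is_lim_seq_ext (fun N => F (S N) - F O)).
  - intros N; symmetry; exact (sum_f_R0_telescope a F N Ha).
  - apply is_lim_seq_minus'; [exact (proj1 (is_lim_seq_incr_1 F l) HF) | apply is_lim_seq_const].
Qed.

Lemma sum_f_R0_le_is_series (a : nat -> R) (l : R) (N : nat) :
  is_series a l -> (forall k, (N < k)%nat -> 0 <= a k) -> sum_f_R0 a N <= l.
Proof.
  intros Hl Ha.
  apply is_series_sum_f_R0, (is_lim_seq_incr_n _ N) in Hl.
  enough (Hmono : forall j, sum_f_R0 a (j + N) <= sum_f_R0 a (S j + N))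
    by exact (is_lim_seq_incr_compare _ l Hl Hmono 0).
  intros j; change (S j + N)%nat with (S (j + N)); rewrite tech5.
  pose proof (Ha (S (j + N)) ltac:(lia)); lra.
Qed.

Lemma is_lim_seq_inv_INR_continuous (f : nat -> R) (g : R -> R) (l : R) :
  continuous g 0 -> g 0 = l -> (forall n, (1 <= n)%nat -> f n = g (/ INR n)) ->
  is_lim_seq f l.
Proof.
  intros Hg <- Hf.
  apply is_lim_seq_incr_1.
  apply (is_lim_seq_ext (fun n => g (/ INR (S n)))).
  { intros n; symmetry; apply Hf; lia. }
  apply is_lim_seq_continuous; [now apply continuity_pt_filterlim|].
  apply (is_lim_seq_incr_1 (fun n => / INR n)).
  replace (Finite 0) with (Rbar_inv p_infty) by reflexivity.
  apply is_lim_seq_inv; [apply is_lim_seq_INR | discriminate].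
Qed.

Definition wallis_integral (n : nat) : R := RInt (fun x => sin x ^ n) 0 (PI / 2).

Lemma ex_RInt_sin_pow (n : nat) (a b : R) : ex_RInt (fun x => sin x ^ n) a b.
Proof.
  apply (ex_RInt_continuous (V := R_CompleteNormedModule)); intros x _.
  apply (ex_derive_continuous (V := R_NormedModule)); auto_derive; auto.
Qed.

Lemma wallis_integral_0 : wallis_integral 0 = PI / 2.
Proof.
  unfold wallis_integral; simpl; rewrite RInt_const.
  unfold scal; simpl; unfold mult; simpl; ring.
Qed.

Lemma wallis_integral_1 : wallis_integral 1 = 1.
Proof.
  unfold wallis_integral; apply is_RInt_unique.
  set (F := fun x => - cos x).
  replace 1 with (minus (F (PI / 2)) (F 0))
    by (unfold F, minus, plus, opp; simpl; rewrite cos_PI2, cos_0; ring).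
  apply (is_RInt_derive (V := R_CompleteNormedModule) F).
  - intros x _; unfold F; auto_derive; auto; ring.
  - intros x _; apply (ex_derive_continuous (V := R_NormedModule)); unfold F; auto_derive; auto.
Qed.

Lemma wallis_integral_rec (n : nat) :
  (INR n + 2) * wallis_integral (S (S n)) = (INR n + 1) * wallis_integral n.
Proof.
  set (f := fun x => (INR n + 2) * sin x ^ S (S n) - (INR n + 1) * sin x ^ n).
  set (F := fun x => - cos x * sin x ^ S n).
  assert (Hzero : is_RInt f 0 (PI / 2) (minus (F (PI / 2)) (F 0))).
  { apply (is_RInt_derive (V := R_CompleteNormedModule) F).
    - intros x _; unfold F; auto_derive; auto.
      replace (match n with 0%nat => 1 | S _ => INR n + 1 end) with (INR n + 1)
        by (destruct n; simpl; ring).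
      assert (Hc : cos x * cos x = 1 - sin x * sin x)
        by (pose proof (sin2_cos2 x); unfold Rsqr in *; lra).
      transitivity (sin x * sin x * sin x ^ n - cos x * cos x * ((INR n + 1) * sin x ^ n));
        [ring | rewrite Hc; unfold f; simpl; ring].
    - intros y _; apply (ex_derive_continuous (V := R_NormedModule)); unfold f; auto_derive; auto. }
  replace (minus (F (PI / 2)) (F 0)) with 0 in Hzero
    by (unfold F, minus, plus, opp; simpl; rewrite cos_PI2, sin_0; ring).
  assert (Hlin : is_RInt f 0 (PI / 2)
      ((INR n + 2) * wallis_integral (S (S n)) - (INR n + 1) * wallis_integral n)).
  { apply (is_RInt_minus (V := R_NormedModule)); apply (is_RInt_scal (V := R_NormedModule));
      apply (RInt_correct (V := R_CompleteNormedModule)), ex_RInt_sin_pow. }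
  apply (is_RInt_unique (V := R_CompleteNormedModule)) in Hzero, Hlin; lra.
Qed.

Lemma wallis_integral_decr (n : nat) : wallis_integral (S n) <= wallis_integral n.
Proof.
  pose proof PI_RGT_0.
  apply RInt_le; [lra | apply ex_RInt_sin_pow | apply ex_RInt_sin_pow |].
  intros x Hx.
  assert (0 <= sin x) by (apply sin_ge_0; lra).
  pose proof (SIN_bound x); pose proof (pow_le (sin x) n ltac:(lra)).
  simpl; nra.
Qed.

Definition wallis_coef (M : nat) : R := poch (1 / 2) M / INR (fact M).

Lemma wallis_coef_S (M : nat) :
  wallis_coef (S M) = wallis_coef M * (2 * INR M + 1) / (2 * INR M + 2).
Proof.
  unfold wallis_coef; simpl poch; rewrite fact_simpl, mult_INR, S_INR.
  pose proof (INR_fact_lt_0 M); pose proof (pos_INR M); field; lra.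
Qed.

Lemma wallis_coef_pos (M : nat) : 0 < wallis_coef M.
Proof.
  apply Rdiv_lt_0_compat; [apply poch_pos; lra | apply INR_fact_lt_0].
Qed.

Lemma wallis_integral_even (M : nat) : wallis_integral (2 * M) = PI / 2 * wallis_coef M.
Proof.
  induction M as [|M IH].
  - change (2 * 0)%nat with 0%nat; rewrite wallis_integral_0; unfold wallis_coef; simpl; field.
  - pose proof (wallis_integral_rec (2 * M)) as Hrec.
    replace (2 * S M)%nat with (S (S (2 * M))) by lia.
    rewrite mult_INR in Hrec; replace (INR 2) with 2 in Hrec by reflexivity; pose proof (pos_INR M).
    apply (Rmult_eq_reg_l (2 * INR M + 2)); [|lra].
    rewrite Hrec, IH, wallis_coef_S; field; lra.
Qed.

Lemma wallis_integral_odd (M : nat) :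
  wallis_integral (S (2 * M)) = / ((2 * INR M + 1) * wallis_coef M).
Proof.
  induction M as [|M IH].
  - change (S (2 * 0)) with 1%nat; rewrite wallis_integral_1; unfold wallis_coef; simpl; field.
  - pose proof (wallis_integral_rec (S (2 * M))) as Hrec.
    pose proof (wallis_coef_pos M); pose proof (pos_INR M).
    replace (S (2 * S M)) with (S (S (S (2 * M)))) by lia.
    rewrite S_INR, mult_INR in Hrec; replace (INR 2) with 2 in Hrec by reflexivity.
    apply (Rmult_eq_reg_l (2 * INR M + 3)); [|lra].
    replace (2 * INR M + 3) with (2 * INR M + 1 + 2) at 1 by ring.
    rewrite Hrec, IH, wallis_coef_S, S_INR; field; lra.
Qed.

Lemma wallis_bounds (M : nat) :
  2 * INR M / (PI * (2 * INR M + 1)) <= INR M * wallis_coef M ^ 2 <= / PI.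
Proof.
  pose proof PI_RGT_0; pose proof (pos_INR M); pose proof (wallis_coef_pos M).
  split.
  - pose proof (wallis_integral_decr (2 * M)) as Hdecr.
    rewrite wallis_integral_odd, wallis_integral_even in Hdecr.
    apply Rmult_le_compat_r with (r := (2 * INR M + 1) * wallis_coef M) in Hdecr; [|nra].
    rewrite Rinv_l in Hdecr by nra.
    apply (Rmult_le_reg_r (PI * (2 * INR M + 1))); [nra|].
    unfold Rdiv; rewrite Rmult_assoc, Rinv_l by nra; nra.
  - destruct M as [|K]; [simpl; rewrite Rmult_0_l; apply Rlt_le, Rinv_0_lt_compat; lra|].
    pose proof (wallis_integral_decr (S (2 * K))) as Hdecr.
    replace (S (S (2 * K))) with (2 * S K)%nat in Hdecr by lia.
    rewrite wallis_integral_even, wallis_integral_odd in Hdecr.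
    pose proof (wallis_coef_S K) as HS; pose proof (wallis_coef_pos K); pose proof (pos_INR K).
    assert (0 < INR (S K)) by (rewrite S_INR; lra).
    replace ((2 * INR K + 1) * wallis_coef K) with (2 * INR (S K) * wallis_coef (S K)) in Hdecr
      by (rewrite HS, S_INR; field; lra).
    apply Rmult_le_compat_r with (r := 2 * INR (S K) * wallis_coef (S K)) in Hdecr; [|nra].
    rewrite Rinv_l in Hdecr by nra.
    apply (Rmult_le_reg_r PI); [lra|]; rewrite Rinv_l by lra; nra.
Qed.

Lemma is_lim_seq_wallis : is_lim_seq (fun M => INR M * wallis_coef M ^ 2) (/ PI).
Proof.
  pose proof PI_RGT_0.
  apply (is_lim_seq_le_le (fun M => 2 * INR M / (PI * (2 * INR M + 1))) _ (fun _ => / PI));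
    [exact wallis_bounds | | apply is_lim_seq_const].
  apply (is_lim_seq_inv_INR_continuous _ (fun x => 2 / (PI * (2 + x)))).
  - apply (ex_derive_continuous (V := R_NormedModule)); auto_derive; nra.
  - field; lra.
  - intros M HM; pose proof (le_INR 1 M HM); simpl in *; field; split; nra.
Qed.

Lemma two_INR_neq_odd (n k : nat) : 2 * INR n <> 2 * INR k + 1.
Proof.
  intros H.
  assert (Hnat : (2 * n)%nat = (2 * k + 1)%nat)
    by (apply INR_eq; rewrite plus_INR, !mult_INR; simpl; lra).
  lia.
Qed.

Lemma two_INR_sub_3_neq_0 (n : nat) : 2 * INR n - 3 <> 0.
Proof. pose proof (two_INR_neq_odd n 1); simpl in *; lra. Qed.

Lemma two_INR_sub_1_neq_0 (n : nat) : 2 * INR n - 1 <> 0.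
Proof. pose proof (two_INR_neq_odd n 0); simpl in *; lra. Qed.

Definition d_coef (n : nat) : R :=
  45 / ((2 * INR n - 3) * (2 * INR n - 1) * (2 * INR n + 1) * (2 * INR n + 3) * (2 * INR n + 5)).

Lemma poch_d_coef (n : nat) : poch (-3/2) n = d_coef n * poch (7/2) n.
Proof.
  induction n as [|n IH]; [unfold d_coef; simpl; field|].
  simpl poch; rewrite IH; unfold d_coef; rewrite S_INR.
  pose proof (pos_INR n); pose proof (two_INR_sub_3_neq_0 n); pose proof (two_INR_sub_1_neq_0 n).
  field; repeat split; lra.
Qed.

Lemma d_coef_pos (n : nat) : (2 <= n)%nat -> 0 < d_coef n.
Proof.
  intros Hn; pose proof (le_INR 2 n Hn); simpl in *.
  unfold d_coef; apply Rdiv_lt_0_compat; [lra|].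
  repeat apply Rmult_lt_0_compat; lra.
Qed.

Lemma is_series_d_coef : is_series d_coef (5 / 8).
Proof.
  set (F := fun n => - (45 / 8) / ((2 * INR n - 3) * (2 * INR n - 1) * (2 * INR n + 1) * (2 * INR n + 3))).
  replace (5 / 8) with (0 - F O) by (unfold F; simpl; field).
  apply is_series_telescope.
  - intros n; unfold d_coef, F; rewrite S_INR.
    pose proof (pos_INR n); pose proof (two_INR_sub_3_neq_0 n); pose proof (two_INR_sub_1_neq_0 n).
    field; repeat split; lra.
  - apply (is_lim_seq_inv_INR_continuous _
      (fun x => - (45 / 8) * x ^ 4 / ((2 - 3 * x) * (2 - x) * (2 + x) * (2 + 3 * x)))).
    + apply (ex_derive_continuous (V := R_NormedModule)); auto_derive; lra.
    + field.
    + intros n Hn; pose proof (le_INR 1 n Hn); simpl in *; unfold F.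
      pose proof (two_INR_sub_3_neq_0 n); pose proof (two_INR_sub_1_neq_0 n).
      field; repeat split; try lra.
Qed.

Lemma ex_series_abs_d_coef : ex_series (fun n => Rabs (d_coef n)).
Proof.
  apply (ex_series_incr_n _ 2).
  apply (ex_series_ext (fun k => d_coef (2 + k))).
  - intros k; rewrite Rabs_right; [reflexivity|].
    apply Rle_ge, Rlt_le, d_coef_pos; lia.
  - apply (ex_series_incr_n d_coef 2); eexists; apply is_series_d_coef.
Qed.

Definition c_coef (m : nat) : R := poch (-3/2) m * poch (1/2) m / INR (fact m) ^ 2.

Lemma c_coef_S (m : nat) :
  c_coef (S m) = c_coef m * (2 * INR m - 3) * (2 * INR m + 1) / (4 * (INR m + 1) ^ 2).
Proof.
  unfold c_coef; simpl poch; rewrite fact_simpl, mult_INR, S_INR.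
  pose proof (INR_fact_lt_0 m); pose proof (pos_INR m); field; lra.
Qed.

Lemma c_coef_wallis (m : nat) :
  c_coef m = 3 * wallis_coef m ^ 2 / ((2 * INR m - 3) * (2 * INR m - 1)).
Proof.
  pose proof (poch_shift (-3/2) m) as H32; pose proof (poch_shift (-1/2) m) as H12.
  replace (-3/2 + 1) with (-1/2) in H32 by field.
  replace (-1/2 + 1) with (1/2) in H12 by field.
  pose proof (two_INR_sub_3_neq_0 m); pose proof (two_INR_sub_1_neq_0 m).
  assert (Hpoch : poch (-3/2) m = 3 * poch (1/2) m / ((2 * INR m - 3) * (2 * INR m - 1))).
  { apply (Rmult_eq_reg_r ((-3/2 + INR m) * (-1/2 + INR m))); [|intros Hz; nra].
    rewrite <- Rmult_assoc, H32.
    replace (-3/2 * poch (-1/2) m * (-1/2 + INR m)) with (-3/2 * (poch (-1/2) m * (-1/2 + INR m)))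
      by ring.
    rewrite H12; field; split; lra. }
  unfold c_coef, wallis_coef; rewrite Hpoch.
  pose proof (INR_fact_lt_0 m); field; repeat split; lra.
Qed.

Lemma c_coef_nonneg (m : nat) : (2 <= m)%nat -> 0 <= c_coef m.
Proof.
  intros Hm; pose proof (le_INR 2 m Hm); simpl in *.
  rewrite c_coef_wallis; apply Rmult_le_pos.
  - pose proof (pow2_ge_0 (wallis_coef m)); lra.
  - apply Rlt_le, Rinv_0_lt_compat; nra.
Qed.

Lemma is_lim_seq_pow3_c_coef : is_lim_seq (fun m => INR m ^ 3 * c_coef m) (3 / (4 * PI)).
Proof.
  pose proof PI_RGT_0.
  assert (Hrat : is_lim_seq (fun m => 3 * INR m ^ 2 / ((2 * INR m - 3) * (2 * INR m - 1))) (3 / 4)).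
  { apply (is_lim_seq_inv_INR_continuous _ (fun x => 3 / ((2 - 3 * x) * (2 - x)))).
    - apply (ex_derive_continuous (V := R_NormedModule)); auto_derive; lra.
    - field.
    - intros m Hm; pose proof (le_INR 1 m Hm); simpl in *.
      pose proof (two_INR_sub_3_neq_0 m); pose proof (two_INR_sub_1_neq_0 m).
      field; repeat split; try lra. }
  apply (is_lim_seq_ext (fun m => (INR m * wallis_coef m ^ 2) * (3 * INR m ^ 2 / ((2 * INR m - 3) * (2 * INR m - 1))))).
  - intros m; rewrite c_coef_wallis.
    pose proof (two_INR_sub_3_neq_0 m); pose proof (two_INR_sub_1_neq_0 m); field; lra.
  - replace (3 / (4 * PI)) with (/ PI * (3 / 4)) by (field; lra).
    apply is_lim_seq_mult'; [apply is_lim_seq_wallis | exact Hrat].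
Qed.

Lemma is_series_c_coef : is_series c_coef (4 / (3 * PI)).
Proof.
  pose proof PI_RGT_0.
  set (F := fun m => 4 / 9 * INR m ^ 2 * (4 * INR m - 7) * c_coef m).
  replace (4 / (3 * PI)) with (4 / (3 * PI) - F O) by (unfold F; simpl; ring).
  apply is_series_telescope.
  - intros m; unfold F; rewrite c_coef_S, S_INR; pose proof (pos_INR m); field; lra.
  - apply (is_lim_seq_ext_loc (fun m => 4 / 9 * ((4 * INR m - 7) / INR m) * (INR m ^ 3 * c_coef m))).
    + exists 1%nat; intros m Hm; pose proof (le_INR 1 m Hm); simpl in *; unfold F; field; lra.
    + replace (4 / (3 * PI)) with (4 / 9 * 4 * (3 / (4 * PI))) by (field; lra).
      apply is_lim_seq_mult'; [apply (is_lim_seq_scal_l _ (4 / 9) 4) | apply is_lim_seq_pow3_c_coef].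
      apply (is_lim_seq_inv_INR_continuous _ (fun x => 4 - 7 * x)).
      * apply (ex_derive_continuous (V := R_NormedModule)); auto_derive; auto.
      * ring.
      * intros m Hm; pose proof (le_INR 1 m Hm); simpl in *; field; lra.
Qed.

Fixpoint falling_ratio (u : R) (n : nat) : R :=
  match n with
  | O => 1
  | S k => falling_ratio u k * (u - INR k - 1) / (u + INR k + 1)
  end.

Lemma falling_ratio_bound (u : R) (n : nat) : 0 < u -> Rabs (falling_ratio u n) <= 1.
Proof.
  intros Hu; induction n as [|n IH]; cbn [falling_ratio]; [rewrite Rabs_R1; lra|].
  pose proof (pos_INR n).
  unfold Rdiv; rewrite !Rabs_mult, Rabs_inv, (Rabs_right (u + INR n + 1)) by lra.
  assert (Hfrac : Rabs (u - INR n - 1) * / (u + INR n + 1) <= 1).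
  { apply (Rmult_le_reg_r (u + INR n + 1)); [lra|].
    rewrite Rmult_assoc, Rinv_l, Rmult_1_r, Rmult_1_l by lra.
    apply Rabs_le; lra. }
  pose proof (Rabs_pos (falling_ratio u n)).
  pose proof (Rabs_pos (u - INR n - 1)).
  pose proof (Rinv_0_lt_compat (u + INR n + 1) ltac:(lra)).
  rewrite Rmult_assoc; nra.
Qed.

Lemma poch_falling_ratio (eta : R) (n : nat) : -1 < eta ->
  poch (- eta) n * (-1) ^ n = falling_ratio (eta + 1) n * poch (2 + eta) n.
Proof.
  intros Heta; induction n as [|n IH]; [simpl; ring|].
  cbn [poch falling_ratio]; pose proof (pos_INR n).
  replace (poch (- eta) n * (- eta + INR n) * (-1) ^ S n)
    with (poch (- eta) n * (-1) ^ n * (eta - INR n)) by (simpl; ring).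
  rewrite IH; field; lra.
Qed.

(* [beta_coef m n = (2n+1) m!^2 / ((m-n)! (m+n+1)!)] for [n <= m], and [0] for [n > m]. *)
Fixpoint beta_coef (m n : nat) : R :=
  match n with
  | O => / (INR m + 1)
  | S k => beta_coef m k * (2 * INR k + 3) * (INR m - INR k) / ((2 * INR k + 1) * (INR m + INR k + 2))
  end.

Lemma beta_coef_eq0 (m n : nat) : (m < n)%nat -> beta_coef m n = 0.
Proof.
  induction n as [|k IH]; intros Hmn; [lia|].
  cbn [beta_coef]; destruct (Nat.eq_dec m k) as [->|Hne].
  - unfold Rminus; rewrite Rplus_opp_r; unfold Rdiv; ring.
  - rewrite IH by lia; unfold Rdiv; ring.
Qed.

Lemma beta_coef_vanish (m k : nat) : (m <= k)%nat -> (INR m - INR k) * beta_coef m k = 0.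
Proof.
  intros Hmk; destruct (Nat.eq_dec m k) as [->|Hne].
  - unfold Rminus; rewrite Rplus_opp_r; ring.
  - rewrite beta_coef_eq0 by lia; ring.
Qed.

Lemma beta_coef_nonneg (m n : nat) : 0 <= beta_coef m n.
Proof.
  pose proof (pos_INR m).
  induction n as [|k IH]; cbn [beta_coef].
  - apply Rlt_le, Rinv_0_lt_compat; lra.
  - destruct (Nat.le_gt_cases k m) as [Hkm|Hmk].
    + pose proof (le_INR k m Hkm); pose proof (pos_INR k).
      apply Rmult_le_pos; [apply Rmult_le_pos; [apply Rmult_le_pos|]|]; try lra.
      apply Rlt_le, Rinv_0_lt_compat, Rmult_lt_0_compat; lra.
    + rewrite beta_coef_eq0 by exact Hmk; unfold Rdiv; lra.
Qed.

Lemma sum_beta_coef_falling_ratio (m : nat) (u : R) (k : nat) : 0 < u ->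
  sum_f_R0 (fun n => beta_coef m n * falling_ratio u n) k =
  u / (u + INR m) - (u - INR k - 1) / ((u + INR m) * (2 * INR k + 1))
                    * ((INR m - INR k) * beta_coef m k) * falling_ratio u k.
Proof.
  intros Hu; pose proof (pos_INR m).
  induction k as [|k IH].
  - simpl; field; lra.
  - rewrite tech5, IH; cbn [beta_coef]; cbn [falling_ratio].
    rewrite S_INR; pose proof (pos_INR k); field; repeat split; lra.
Qed.

Lemma sum_beta_coef (m k : nat) :
  sum_f_R0 (beta_coef m) k = 1 - (INR m - INR k) * beta_coef m k / (2 * INR k + 1).
Proof.
  pose proof (pos_INR m).
  induction k as [|k IH].
  - simpl; field; lra.
  - rewrite tech5, IH; cbn [beta_coef].
    rewrite S_INR; pose proof (pos_INR k); field; repeat split; lra.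
Qed.

Lemma sum_beta_coef_full (m N : nat) : (m <= N)%nat -> sum_f_R0 (beta_coef m) N = 1.
Proof.
  intros HmN; rewrite sum_beta_coef, beta_coef_vanish by exact HmN; unfold Rdiv; ring.
Qed.

Lemma sum_beta_coef_falling_ratio_full (m : nat) (u : R) (N : nat) : 0 < u -> (m <= N)%nat ->
  sum_f_R0 (fun n => beta_coef m n * falling_ratio u n) N = u / (u + INR m).
Proof.
  intros Hu HmN; rewrite sum_beta_coef_falling_ratio, beta_coef_vanish by assumption; ring.
Qed.

Lemma beta_coef_succ_l (M n : nat) :
  (INR (S M) - INR n) * (INR (S M) + INR n + 1) * beta_coef (S M) n
  = (INR M + 1) ^ 2 * beta_coef M n.
Proof.
  pose proof (pos_INR M).
  induction n as [|n IH]; cbn [beta_coef]; rewrite !S_INR in *.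
  - simpl INR; field; lra.
  - pose proof (pos_INR n).
    assert (Hprev : beta_coef M n = (INR M + 1 - INR n) * (INR M + 1 + INR n + 1)
                                    * beta_coef (S M) n / (INR M + 1) ^ 2)
      by (rewrite IH; field; lra).
    rewrite Hprev; field; repeat split; lra.
Qed.

(* Certificate produced by Gosper's algorithm for the sum over [m] of [c_coef m * beta_coef m n]. *)
Definition gosper_cert (n : nat) (x : R) : R :=
  let N := INR n * (INR n + 1) - 7 / 4 in
  128 / 45 * d_coef n / (2 * INR n + 1) * (x ^ 2 + N * x + (N ^ 2 - 5 / 2) / 2).

Lemma gosper_cert_spec (n : nat) (x : R) :
  gosper_cert n (x + 1) * ((2 * x - 3) * (2 * x + 1) / 4)
  - (x - INR n) * (x + INR n + 1) * gosper_cert n x = 1.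
Proof.
  unfold gosper_cert, d_coef; pose proof (pos_INR n).
  pose proof (two_INR_sub_3_neq_0 n); pose proof (two_INR_sub_1_neq_0 n).
  field; repeat split; lra.
Qed.

Definition column_antidiff (n M : nat) : R :=
  gosper_cert n (INR M) * c_coef M * ((INR M - INR n) * (INR M + INR n + 1) * beta_coef M n).

Lemma column_antidiff_0 (n : nat) : column_antidiff n 0 = 0.
Proof.
  unfold column_antidiff; destruct n as [|n].
  - simpl; ring.
  - rewrite beta_coef_eq0 by lia; ring.
Qed.

Lemma column_antidiff_S (n M : nat) :
  c_coef M * beta_coef M n = column_antidiff n (S M) - column_antidiff n M.
Proof.
  unfold column_antidiff; rewrite beta_coef_succ_l, c_coef_S.
  pose proof (gosper_cert_spec n (INR M)) as Hcert; rewrite <- S_INR in Hcert.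
  pose proof (pos_INR M).
  transitivity (c_coef M * beta_coef M n *
    (gosper_cert n (INR (S M)) * ((2 * INR M - 3) * (2 * INR M + 1) / 4)
     - (INR M - INR n) * (INR M + INR n + 1) * gosper_cert n (INR M))).
  - rewrite Hcert; ring.
  - field; lra.
Qed.

Lemma is_lim_seq_beta_coef (n : nat) : is_lim_seq (fun M => INR M * beta_coef M n) (2 * INR n + 1).
Proof.
  induction n as [|n IH].
  - apply (is_lim_seq_inv_INR_continuous _ (fun x => 1 / (1 + x))).
    + apply (ex_derive_continuous (V := R_NormedModule)); auto_derive; lra.
    + simpl; field.
    + intros M HM; pose proof (le_INR 1 M HM); simpl in *; field; lra.
  - pose proof (pos_INR n).
    apply (is_lim_seq_ext (fun M => INR M * beta_coef M n *
      ((2 * INR n + 3) * (INR M - INR n) / ((2 * INR n + 1) * (INR M + INR n + 2))))).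
    { intros M; cbn [beta_coef]; unfold Rdiv; ring. }
    replace (2 * INR (S n) + 1) with ((2 * INR n + 1) * ((2 * INR n + 3) / (2 * INR n + 1)))
      by (rewrite S_INR; field; lra).
    apply is_lim_seq_mult'; [exact IH|].
    apply (is_lim_seq_inv_INR_continuous _
      (fun x => (2 * INR n + 3) * (1 - INR n * x) / ((2 * INR n + 1) * (1 + (INR n + 2) * x)))).
    + apply (ex_derive_continuous (V := R_NormedModule)); auto_derive; nra.
    + field; lra.
    + intros M HM; pose proof (le_INR 1 M HM); simpl in *.
      pose proof (Rinv_0_lt_compat (INR M) ltac:(lra)).
      field; repeat split; try lra; nra.
Qed.

Lemma is_series_c_coef_beta_coef (n : nat) :
  is_series (fun m => c_coef m * beta_coef m n) (32 / (15 * PI) * d_coef n).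
Proof.
  pose proof PI_RGT_0; pose proof (pos_INR n).
  replace (32 / (15 * PI) * d_coef n) with (32 / (15 * PI) * d_coef n - column_antidiff n 0)
    by (rewrite column_antidiff_0; ring).
  apply is_series_telescope; [apply column_antidiff_S|].
  set (N := INR n * (INR n + 1) - 7 / 4).
  apply (is_lim_seq_ext_loc (fun M =>
    (gosper_cert n (INR M) * (INR M - INR n) * (INR M + INR n + 1) / INR M ^ 4)
    * (INR M * beta_coef M n) * (INR M ^ 3 * c_coef M))).
  { exists 1%nat; intros M HM; pose proof (le_INR 1 M HM); simpl in *.
    unfold column_antidiff; field; lra. }
  replace (32 / (15 * PI) * d_coef n)
    with (128 / 45 * d_coef n / (2 * INR n + 1) * (2 * INR n + 1) * (3 / (4 * PI)))
    by (field; lra).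
  apply is_lim_seq_mult'; [apply is_lim_seq_mult'|]; [| apply is_lim_seq_beta_coef | apply is_lim_seq_pow3_c_coef].
  apply (is_lim_seq_inv_INR_continuous _ (fun x => 128 / 45 * d_coef n / (2 * INR n + 1)
    * (1 + N * x + (N ^ 2 - 5 / 2) / 2 * x ^ 2) * (1 - INR n * x) * (1 + (INR n + 1) * x))).
  - apply (ex_derive_continuous (V := R_NormedModule)); auto_derive; auto.
  - ring.
  - intros M HM; pose proof (le_INR 1 M HM); simpl in *.
    unfold gosper_cert; fold N; field; lra.
Qed.

Section KernelExchange.

Variables (c d p x : nat -> R) (K : nat -> nat -> R) (lam sd : R) (m0 : nat).

Hypothesis K_nonneg : forall m n, 0 <= K m n.
Hypothesis K_row_sum : forall m N, (m <= N)%nat -> sum_f_R0 (K m) N = 1.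
Hypothesis K_expansion : forall m N, (m <= N)%nat -> sum_f_R0 (fun n => K m n * p n) N = x m.
Hypothesis p_bound : forall n, Rabs (p n) <= 1.
Hypothesis c_nonneg : forall m, (m0 < m)%nat -> 0 <= c m.
Hypothesis K_column_sum : forall n, is_series (fun m => c m * K m n) (lam * d n).
Hypothesis d_sum : is_series d sd.
Hypothesis d_abs : ex_series (fun n => Rabs (d n)).
Hypothesis c_sum : is_series c (lam * sd).

Let column (n N : nat) : R := sum_f_R0 (fun m => c m * K m n) N.

Lemma ex_series_mult_bounded : ex_series (fun n => d n * p n).
Proof.
  apply (ex_series_le (V := R_CompleteNormedModule) _ (fun n => Rabs (d n))); [|exact d_abs].
  intros n; change (norm (d n * p n)) with (Rabs (d n * p n)); rewrite Rabs_mult.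
  pose proof (Rabs_pos (d n)); pose proof (p_bound n); nra.
Qed.

Lemma sum_f_R0_exchange (N : nat) :
  sum_f_R0 (fun m => c m * x m) N = sum_f_R0 (fun n => p n * column n N) N.
Proof.
  rewrite (sum_eq _ (fun m => sum_f_R0 (fun n => c m * K m n * p n) N)).
  - rewrite sum_f_R0_switch; apply sum_eq; intros n _.
    unfold column; rewrite scal_sum; apply sum_eq; intros; ring.
  - intros m Hm; rewrite <- (K_expansion m N Hm), scal_sum; apply sum_eq; intros; ring.
Qed.

Lemma sum_f_R0_column (N : nat) : sum_f_R0 (fun n => column n N) N = sum_f_R0 c N.
Proof.
  unfold column; rewrite <- sum_f_R0_switch; apply sum_eq; intros m Hm.
  rewrite (sum_eq _ (fun n => K m n * c m)) by (intros; ring).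
  rewrite <- scal_sum, K_row_sum by exact Hm; ring.
Qed.

Lemma column_le (n N : nat) : (m0 <= N)%nat -> column n N <= lam * d n.
Proof.
  intros HN; apply sum_f_R0_le_is_series; [apply K_column_sum|].
  intros m Hm; apply Rmult_le_pos; [apply c_nonneg; lia | apply K_nonneg].
Qed.

Lemma exchange_error_bound (N : nat) : (m0 <= N)%nat ->
  Rabs (lam * sum_f_R0 (fun n => d n * p n) N - sum_f_R0 (fun m => c m * x m) N)
  <= lam * sum_f_R0 d N - sum_f_R0 c N.
Proof.
  intros HN.
  rewrite sum_f_R0_exchange, <- sum_f_R0_column, scal_sum, scal_sum, <- !minus_sum.
  eapply Rle_trans; [apply Rsum_abs | apply sum_Rle]; intros n _.
  pose proof (column_le n N HN); pose proof (p_bound n).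
  replace (d n * p n * lam - p n * column n N) with (p n * (d n * lam - column n N)) by ring.
  rewrite Rabs_mult, (Rabs_right (d n * lam - column n N)) by lra; nra.
Qed.

Theorem is_series_kernel_exchange :
  is_series (fun m => c m * x m) (lam * Series (fun n => d n * p n)).
Proof.
  set (A := fun N => sum_f_R0 (fun n => d n * p n) N).
  set (B := fun N => sum_f_R0 (fun m => c m * x m) N).
  set (E := fun N => lam * sum_f_R0 d N - sum_f_R0 c N).
  assert (HA : is_lim_seq A (Series (fun n => d n * p n)))
    by (apply is_series_sum_f_R0, Series_correct, ex_series_mult_bounded).
  assert (HE : is_lim_seq E 0).
  { replace 0 with (lam * sd - lam * sd) by ring.
    apply is_lim_seq_minus'; [apply (is_lim_seq_scal_l _ lam sd) |];
      apply is_series_sum_f_R0; assumption. }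
  assert (Herr : is_lim_seq (fun N => lam * A N - B N) 0).
  { apply (is_lim_seq_le_le_loc (fun N => - E N) _ E); [| | exact HE].
    - exists m0; intros N HN; apply Rabs_le_between, exchange_error_bound, HN.
    - replace (Finite 0) with (Rbar_opp 0) by (simpl; f_equal; ring).
      exact (proj1 (is_lim_seq_opp E 0) HE). }
  apply is_series_sum_f_R0.
  apply (is_lim_seq_ext (fun N => lam * A N - (lam * A N - B N))); [intros; unfold B; ring|].
  replace (lam * Series (fun n => d n * p n)) with (lam * Series (fun n => d n * p n) - 0) by ring.
  apply is_lim_seq_minus'; [apply (is_lim_seq_scal_l _ lam _ HA) | exact Herr].
Qed.

End KernelExchange.

Lemma is_series_c_coef_ratio (u : R) : 0 < u ->
  is_series (fun m => c_coef m * (u / (u + INR m)))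
    (32 / (15 * PI) * Series (fun n => d_coef n * falling_ratio u n)).
Proof.
  intros Hu; pose proof PI_RGT_0.
  apply (is_series_kernel_exchange _ _ _ _ beta_coef _ (5 / 8) 1).
  - exact beta_coef_nonneg.
  - exact sum_beta_coef_full.
  - intros m N; apply sum_beta_coef_falling_ratio_full, Hu.
  - intros n; apply falling_ratio_bound, Hu.
  - intros m Hm; apply c_coef_nonneg; lia.
  - exact is_series_c_coef_beta_coef.
  - exact is_series_d_coef.
  - exact ex_series_abs_d_coef.
  - replace (32 / (15 * PI) * (5 / 8)) with (4 / (3 * PI)) by (field; lra).
    exact is_series_c_coef.
Qed.

Lemma Series_c_coef_ratio_ge (u : R) : 0 < u ->
  1 / 4 <= Series (fun m => c_coef m * (u / (u + INR m))).
Proof.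
  intros Hu.
  assert (Hser : ex_series (fun m => c_coef m * (u / (u + INR m))))
    by (eexists; apply is_series_c_coef_ratio, Hu).
  apply Rle_trans with (sum_f_R0 (fun m => c_coef m * (u / (u + INR m))) 1).
  - replace (sum_f_R0 (fun m => c_coef m * (u / (u + INR m))) 1) with (1 / 4 + 3 / (4 * (u + 1)))
      by (unfold c_coef; simpl; field; lra).
    pose proof (Rdiv_lt_0_compat 3 (4 * (u + 1)) ltac:(lra) ltac:(lra)); lra.
  - apply sum_f_R0_le_is_series; [apply Series_correct, Hser|].
    intros m Hm; pose proof (pos_INR m).
    apply Rmult_le_pos; [apply c_coef_nonneg; lia | apply Rlt_le, Rdiv_lt_0_compat; lra].
Qed.

Lemma hyp_term_numerator (eta : R) (n : nat) : -1 < eta ->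
  hyp_term [-3/2; 1; -eta] [7/2; 2 + eta] (-1) n = d_coef n * falling_ratio (eta + 1) n.
Proof.
  intros Heta; unfold hyp_term, poch_prod; cbn [fold_right].
  rewrite poch_d_coef, poch_1.
  assert (Hratio : falling_ratio (eta + 1) n = poch (- eta) n * (-1) ^ n / poch (2 + eta) n)
    by (rewrite poch_falling_ratio by exact Heta; field; apply Rgt_not_eq, poch_pos; lra).
  rewrite Hratio.
  pose proof (poch_pos (7/2) n ltac:(lra)); pose proof (poch_pos (2 + eta) n ltac:(lra)).
  pose proof (INR_fact_lt_0 n); field; repeat split; lra.
Qed.

Lemma hyp_term_denominator (eta : R) (n : nat) : -1 < eta ->
  hyp_term [-3/2; 1/2; 1 + eta] [1; 2 + eta] 1 n = c_coef n * ((eta + 1) / ((eta + 1) + INR n)).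
Proof.
  intros Heta; unfold hyp_term, poch_prod; cbn [fold_right].
  pose proof (poch_shift (1 + eta) n) as Hshift.
  replace (1 + eta + 1) with (2 + eta) in Hshift by ring.
  assert (Hpoch : poch (1 + eta) n = (1 + eta) * poch (2 + eta) n / (1 + eta + INR n))
    by (rewrite <- Hshift; pose proof (pos_INR n); field; lra).
  rewrite Hpoch, poch_1, pow1; unfold c_coef.
  pose proof (poch_pos (2 + eta) n ltac:(lra)); pose proof (pos_INR n).
  pose proof (INR_fact_lt_0 n); field; repeat split; lra.
Qed.

Theorem mainTheorem15 (eta : R) (heta : -1 < eta) :
  ex_series (hyp_term [-3/2; 1; -eta] [7/2; 2 + eta] (-1)) /\
  ex_series (hyp_term [-3/2; 1/2; 1 + eta] [1; 2 + eta] 1) /\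
  15 * PI / 32 =
    pFq [-3/2; 1; -eta] [7/2; 2 + eta] (-1) /
    pFq [-3/2; 1/2; 1 + eta] [1; 2 + eta] 1.
Proof.
  assert (Hu : 0 < eta + 1) by lra.
  pose proof PI_RGT_0.
  pose proof (fun n => hyp_term_numerator eta n heta) as Hnum.
  pose proof (fun n => hyp_term_denominator eta n heta) as Hden.
  pose proof (is_series_c_coef_ratio (eta + 1) Hu) as Hser.
  pose proof (Series_c_coef_ratio_ge (eta + 1) Hu) as Hpos.
  rewrite (is_series_unique _ _ Hser) in Hpos.
  split; [|split].
  - apply (ex_series_ext _ _ (fun n => eq_sym (Hnum n))).
    apply (ex_series_mult_bounded d_coef (falling_ratio (eta + 1))).
    + intros n; apply falling_ratio_bound, Hu.
    + exact ex_series_abs_d_coef.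
  - exists (32 / (15 * PI) * Series (fun n => d_coef n * falling_ratio (eta + 1) n)).
    exact (is_series_ext _ _ _ (fun n => eq_sym (Hden n)) Hser).
  - unfold pFq; rewrite (Series_ext _ _ Hnum), (Series_ext _ _ Hden), (is_series_unique _ _ Hser).
    field; split; nra.
Qed.
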